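(* For every $b\in\mathbb N$, every $\mathfrak a\in I_K$ and every $m\in\mathbb Z$ one has \[ G^b(\mathfrak a,m,0)=\frac{N_{bD}(\mathfrak a,m)}{D}. \]
   Context: Let $K$ be a real quadratic number field whose discriminant $D$ is odd (so $D>1$, $D\equiv 1 \pmod 4$ and $D$ is squarefree). Let $\mathcal O_K$ be its ring of integers, $x\mapsto x'$ the nontrivial automorphism of $K$, $N(x)=xx'$ and $\mathrm{tr}(x)=x+x'$. Let $I_K$ be the group of nonzero fractional ideals of $K$. For $\mathfrak a\in I_K$ let $N(\mathfrak a)\in\mathbb Q_{>0}$ denote its absolute norm; it is multiplicative and $N(x\mathcal O_K)=|N(x)|$. Let $\mathfrak d=\sqrt D\,\mathcal O_K$ be the different. Put $e(x)=e^{2\pi i x}$. For $b\in\mathbb N$, $\mathfrak a\in I_K$ and $m\in\mathbb Z$ define \[ G^b(\mathfrak a,m,0)=\#\Big\{\lambda\in \mathfrak a\mathfrak d^{-1}/b\mathfrak a : \tfrac{N(\lambda)}{N(\mathfrak a)}\equiv -\tfrac{m}{D}\pmod{b\mathbb Z}\Big\}, \] where the congruence means that the difference of the two rational numbers lies in $b\mathbb Z$. Further define \[ R_b(\mathfrak a,m)=\Big\{\lambda\in\mathfrak a/b\mathfrak a : \tfrac{N(\lambda)}{N(\mathfrak a)}\equiv m\pmod b\Big\},\qquad N_b(\mathfrak a,m)=\#R_b(\mathfrak a,m) \] (for $\lambda\in\mathfrak a$ the number $N(\lambda)/N(\mathfrak a)$ is an integer whose class mod $b$ depends only on $\lambda$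 mod $b\mathfrak a$). *)

From HB Require Import structures.
From mathcomp Require Import all_boot all_order all_algebra.
From mathcomp Require Import finmap boolp classical_sets cardinality.
Set Implicit Arguments. Unset Strict Implicit. Unset Printing Implicit Defensive.
Import Order.TTheory GRing.Theory Num.Theory.
Local Open Scope ring_scope.
Local Open Scope classical_set_scope.

(* Elements of K = Q(sqrt D) are pairs (x, y) : rat * rat standing for
   x + y * sqrt D.  D is passed explicitly. *)
Definition qf := (rat * rat)%type.

Definition qadd (x y : qf) : qf := (x.1 + y.1, x.2 + y.2).
Definition qmul (D : nat) (x y : qf) : qf :=
  (x.1 * y.1 + D%:R * (x.2 * y.2), x.1 * y.2 + x.2 * y.1).
Definition qscale (r : rat) (x : qf) : qf := (r * x.1, r * x.2).
Definition qconj (x : qf) : qf := (x.1, - x.2).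
(* N(x) = x x' and tr(x) = x + x' *)
Definition qnorm (D : nat) (x : qf) : rat := x.1 ^+ 2 - D%:R * x.2 ^+ 2.
Definition qtr (x : qf) : rat := 2 * x.1.

(* Ring of integers for D = 1 mod 4 : Z[omega], omega = (1 + sqrt D)/2. *)
Definition OK (D : nat) : set qf :=
  [set z | exists u v : int, z = (u%:~R + v%:~R / 2, v%:~R / 2)].

Definition is_frac_ideal (D : nat) (A : set qf) : Prop :=
  [/\ A (0, 0),
      (forall x y, A x -> A y -> A (qadd x y)),
      (forall r x, OK D r -> A x -> A (qmul D r x)),
      (exists x, A x /\ x <> (0, 0)) &
      (exists d : nat, (0 < d)%N /\ forall x, A x -> OK D (qscale d%:R x))].

Definition ideal_mul (D : nat) (A B : set qf) : set qf :=
  [set z | exists s : seq (qf * qf),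
      (forall p, p \in s -> A p.1 /\ B p.2) /\
      z = foldr (fun p acc => qadd (qmul D p.1 p.2) acc) (0, 0) s].

Definition ideal_inv (D : nat) (A : set qf) : set qf :=
  [set x | forall y, A y -> OK D (qmul D x y)].

Definition different (D : nat) : set qf := [set qmul D (0, 1) y | y in OK D].

Definition iscale (n : nat) (A : set qf) : set qf := [set qscale n%:R x | x in A].

Definition coset (L : set qf) (x : qf) : set qf := [set qadd x y | y in L].

Definition count_mod (L1 L2 : set qf) (P : qf -> Prop) : nat :=
  (#|` fset_set (coset L2 @` [set x | L1 x /\ P x]) |)%fset.

Definition lindex (L1 L2 : set qf) : nat := count_mod L1 L2 (fun _ => True).

(* absolute norm N(A) = [O_K : A] = [O_K : O_K cap A] / [A : O_K cap A] *)
Definition absnorm (D : nat) (A : set qf) : rat :=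
  (lindex (OK D) (OK D `&` A))%:R / (lindex A (OK D `&` A))%:R.

Definition Gb (D b : nat) (A : set qf) (m : int) : nat :=
  count_mod (ideal_mul D A (ideal_inv D (different D))) (iscale b A)
    (fun l => exists k : int,
       qnorm D l / absnorm D A - (- (m%:~R / D%:R)) = b%:R * k%:~R).

Definition Nb (D b : nat) (A : set qf) (m : int) : nat :=
  count_mod A (iscale b A)
    (fun l => exists k : int, qnorm D l / absnorm D A - m%:~R = b%:R * k%:~R).

Definition squarefree (n : nat) : Prop :=
  forall p : nat, prime p -> ~ (p * p %| n)%N.

From HB Require Import structures.
From mathcomp Require Import all_boot all_order all_algebra.
From mathcomp Require Import finmap boolp classical_sets cardinality.
From mathcomp Require Import ring lra zify.
Import Order.TTheory GRing.Theory Num.Theory.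
Set Implicit Arguments. Unset Strict Implicit. Unset Printing Implicit Defensive.
Local Open Scope ring_scope.
Local Open Scope classical_set_scope.

(* Multiplication by sqrt D maps a d^-1 = (sqrt D)^-1 a onto a and b a onto b sqrt(D) a, and it
   turns the condition N(l)/N(a) = -m/D (mod b) into N(mu)/N(a) = m (mod bD).  For x, z in a,
   N(x + b sqrt(D) z)/N(a) = N(x)/N(a) (mod bD) because x z'/N(a) lies in O_K, so the latter
   condition only depends on mu modulo b sqrt(D) a.  Hence
   N_{bD}(a, m) = [b sqrt(D) a : b D a] G^b(a, m, 0), and the index is D: multiplying by
   c sqrt(D) gives [c sqrt(D) a : c D a] [sqrt(D) a : D a] = [a : D a] = D^2 for every c > 0.
   Cosets are counted in the coordinates of a Z-basis q a, q (c + omega) of a (a Hermite normal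
   form, which exists because D is squarefree); the same basis gives N(a) = q^2 a. *)

Definition qsub (x y : qf) : qf := (x.1 - y.1, x.2 - y.2).
Definition q0 : qf := (0, 0).

Lemma qf_ext (x y : qf) : x.1 = y.1 -> x.2 = y.2 -> x = y.
Proof. by case: x y => ? ? [? ?] /= -> ->. Qed.

Lemma qsubxx x : qsub x x = q0.
Proof. by rewrite /qsub !subrr. Qed.

Lemma qmulDr D s x y : qmul D s (qadd x y) = qadd (qmul D s x) (qmul D s y).
Proof. by apply: qf_ext; rewrite /qmul /qadd /=; ring. Qed.

Lemma qmulBr D s x y : qmul D s (qsub x y) = qsub (qmul D s x) (qmul D s y).
Proof. by apply: qf_ext; rewrite /qmul /qsub /=; ring. Qed.

Definition addgroup (M : set qf) := M q0 /\ (forall x y, M x -> M y -> M (qsub x y)).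

Section AddGroup.
Variable M : set qf.
Hypothesis gM : addgroup M.

Lemma addgroup_sub_refl a : M (qsub a a).
Proof. by rewrite qsubxx; case: gM. Qed.

Lemma addgroup_subC a b : M (qsub a b) -> M (qsub b a).
Proof.
case: gM => M0 Ms h; have := Ms _ _ M0 h; congr M.
by apply: qf_ext; rewrite /qsub /q0 /=; ring.
Qed.

Lemma addgroup_sub_trans a b c : M (qsub a b) -> M (qsub b c) -> M (qsub a c).
Proof.
move=> h1 h2; have := gM.2 _ _ h1 (addgroup_subC h2); congr M.
by apply: qf_ext; rewrite /qsub /=; ring.
Qed.

Lemma addgroup_add x y : M x -> M y -> M (qadd x y).
Proof.
case: gM => M0 Ms Mx My; have := Ms _ _ Mx (Ms _ _ M0 My); congr M.
by apply: qf_ext; rewrite /qsub /qadd /q0 /=; ring.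
Qed.

Lemma addgroup_subKr x y : M x -> M (qsub x y) -> M y.
Proof.
move=> Mx Mxy; have := gM.2 _ _ Mx Mxy; congr M.
by apply: qf_ext; rewrite /qsub /=; ring.
Qed.

Lemma coset_eqP x y : coset M x = coset M y <-> M (qsub x y).
Proof.
split=> [E|Mxy].
  have : coset M x x by exists q0; [case: gM | apply: qf_ext; rewrite /qadd /q0 /= addr0].
  rewrite E => -[w Mw <-]; congr M: Mw.
  by apply: qf_ext; rewrite /qsub /qadd /=; ring.
apply/seteqP; split=> z [w Mw <-].
  exists (qadd w (qsub x y)); first exact: addgroup_add.
  by apply: qf_ext; rewrite /qadd /qsub /=; ring.
exists (qsub w (qsub x y)); first exact: gM.2.
by apply: qf_ext; rewrite /qadd /qsub /=; ring.
Qed.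

End AddGroup.

Lemma addgroupI M N : addgroup M -> addgroup N -> addgroup (M `&` N).
Proof.
move=> [M0 Ms] [N0 Ns]; split; first by split.
by move=> x y [Mx Nx] [My Ny]; split; [exact: Ms | exact: Ns].
Qed.

Lemma card_imfset_eq_kernel (F F' : finType) (T : choiceType) (S : {set F})
    (h1 : F -> F') (h2 : F -> T) :
  {in S &, forall f f', (h1 f == h1 f') = (h2 f == h2 f')} ->
  #|` [fset h2 f | f in S]%fset| = #|h1 @: S|.
Proof.
move=> hk.
pose r f := odflt f [pick f' in S | h1 f' == h1 f].
have rS f : f \in S -> r f \in S /\ h1 (r f) = h1 f.
  move=> Sf; rewrite /r; case: pickP => [f' /andP[Sf' /eqP] //|/(_ f)].
  by rewrite Sf eqxx.
have rE f f' : f \in S -> f' \in S -> h1 f = h1 f' -> r f = r f'.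
  move=> Sf Sf' e; rewrite /r (@eq_pick _ _ (fun g => (g \in S) && (h1 g == h1 f'))).
    by case: pickP => //= /(_ f'); rewrite Sf' eqxx.
  by move=> g; rewrite e.
pose R := r @: S.
have h1R : h1 @: R = h1 @: S.
  apply/setP=> y; apply/imsetP/imsetP => [[g /imsetP[f Sf ->] ->]|[f Sf ->]].
    by exists f => //; case: (rS f Sf).
  by exists (r f); [apply/imsetP; exists f | case: (rS f Sf)].
have -> : [fset h2 f | f in S]%fset = [fset h2 f | f in R]%fset.
  apply/fsetP=> x; apply/imfsetP/imfsetP => /= [[f Sf ->]|[g /imsetP[f Sf ->] ->]].
    exists (r f); first by apply/imsetP; exists f.
    have [Sr e] := rS f Sf; apply/eqP; rewrite eq_sym -hk //; exact/eqP.
  have [Sr e] := rS f Sf; exists f => //; apply/eqP; rewrite -hk //; exact/eqP.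
have injR : {in R &, injective h1}.
  move=> _ _ /imsetP[f Sf ->] /imsetP[f' Sf' ->] e.
  have [_ e1] := rS f Sf; have [_ e2] := rS f' Sf'.
  by apply: rE => //; rewrite -e1 -e2.
rewrite card_in_imfset; last first.
  move=> g g' gR g'R e; apply: injR => //; apply/eqP.
  by rewrite hk ?e //; [case/imsetP: gR => f Sf -> | case/imsetP: g'R => f Sf ->]; case: (rS f Sf).
by rewrite -h1R card_in_imset // cardE.
Qed.

Lemma card_fibers_const (F F' : finType) (S : {set F}) (h : F -> F') k :
  (forall f, f \in S -> #|[set f' in S | h f' == h f]| = k) ->
  #|S| = (#|h @: S| * k)%N.
Proof.
move=> hk; rewrite -sum1_card (partition_big_imset h) /= -sum_nat_const.
apply: eq_bigr => _ /imsetP [f Sf ->].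
by rewrite -(hk f Sf) sum1_card; apply: eq_card => g; rewrite !inE.
Qed.

Section ParamCount.
Variables (F : finType) (phi : F -> qf).

Definition param_set (L : set qf) (P : qf -> Prop) : {set F} :=
  [set f | `[< L (phi f) /\ P (phi f) >]].
Definition param_coset (M : set qf) (f : F) : {set F} :=
  [set f' | `[< M (qsub (phi f') (phi f)) >]].

Lemma param_coset_eqP M f f' : addgroup M ->
  (param_coset M f' == param_coset M f) <-> M (qsub (phi f') (phi f)).
Proof.
move=> gM; split => [/eqP e|h].
  have : f' \in param_coset M f' by rewrite inE; apply/asboolP; exact: addgroup_sub_refl.
  by rewrite e inE => /asboolP.
apply/eqP/setP => g; rewrite !inE; apply/asboolP/asboolP => hg.
  exact: addgroup_sub_trans hg h.
exact: addgroup_sub_trans hg (addgroup_subC gM h).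
Qed.

Lemma count_mod_param L M P : addgroup M ->
  (forall x, L x -> exists f, M (qsub x (phi f))) ->
  (forall x y, L x -> M (qsub x y) -> L y /\ (P x <-> P y)) ->
  count_mod L M P = #|param_coset M @: param_set L P|.
Proof.
move=> gM phiS LP; rewrite /count_mod.
have -> : coset M @` [set x | L x /\ P x] =
    [set` [fset coset M (phi f) | f in param_set L P]%fset].
  apply/seteqP; split => [_ [x [Lx Px] <-]|_ /imfsetP [f /= Sf ->]].
    have [f Mf] := phiS x Lx; have [Lf Pf] := LP _ _ Lx Mf.
    apply/imfsetP; exists f; last exact/coset_eqP.
    by rewrite /= inE; apply/asboolP; split => //; apply/Pf.
  by exists (phi f) => //; move: Sf; rewrite inE => /asboolP.
rewrite set_fsetK; apply: card_imfset_eq_kernel => f f' _ _.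
have cosetE g g' : param_coset M g' = param_coset M g <-> M (qsub (phi g') (phi g)).
  by rewrite -(param_coset_eqP _ _ gM); split => /eqP.
apply/idP/idP => /eqP e; apply/eqP.
  by apply/(coset_eqP gM)/(addgroup_subC gM)/cosetE.
by apply/cosetE/(addgroup_subC gM)/(coset_eqP gM).
Qed.

End ParamCount.

(* Each coset of M meeting L has exactly #|psi^-1(M)| preimages, psi being additive modulo M. *)
Lemma card_param_set n1 n2 (psi : 'Z_n1 * 'Z_n2 -> qf) L M P :
  addgroup M ->
  (forall f g, M (qsub (psi (f + g)) (qadd (psi f) (psi g)))) ->
  (forall x, L x -> exists f, M (qsub x (psi f))) ->
  (forall x y, L x -> M (qsub x y) -> L y /\ (P x <-> P y)) ->
  #|param_set psi L P| = (count_mod L M P * #|param_set psi M (fun=> True)|)%N.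
Proof.
move=> gM psiD psiS LP; rewrite (count_mod_param gM psiS LP).
apply: card_fibers_const => f; rewrite inE => /asboolP [Lf Pf].
rewrite -[RHS](card_imset _ (addrI f)); apply: eq_card => g; rewrite !inE.
apply/andP/imsetP => [[_ /(@param_coset_eqP _ _ M _ _ gM) Mgf]|[h]].
  exists (g - f); last by rewrite addrC subrK.
  rewrite inE; apply/asboolP; split => //.
  have := psiD f (g - f); rewrite addrC subrK => Mg.
  have := gM.2 _ _ Mgf Mg; congr M; apply: qf_ext => /=; ring.
rewrite inE => /asboolP [Mh _] ->.
have Mfh : M (qsub (psi (f + h)) (psi f)).
  have := addgroup_add gM (psiD f h) Mh; congr M; apply: qf_ext => /=; ring.
have [Lfh Pfh] := LP _ _ Lf (addgroup_subC gM Mfh).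
split; first by apply/asboolP; split => //; apply/Pfh.
exact/(@param_coset_eqP _ _ M _ _ gM).
Qed.

Definition lincomb (i j : int) (e1 e2 : qf) : qf :=
  qadd (qscale i%:~R e1) (qscale j%:~R e2).
Definition lattice (e1 e2 : qf) : set qf := [set x | exists i j : int, x = lincomb i j e1 e2].
Definition sublattice (e1 e2 : qf) (n1 n2 : nat) : set qf :=
  lattice (qscale n1%:R e1) (qscale n2%:R e2).
Definition det2 (e1 e2 : qf) : rat := e1.1 * e2.2 - e1.2 * e2.1.

Lemma lincombB i j i' j' e1 e2 :
  qsub (lincomb i j e1 e2) (lincomb i' j' e1 e2) = lincomb (i - i') (j - j') e1 e2.
Proof. rewrite /lincomb /qsub /qadd /qscale /=; congr pair; rewrite !intrB; ring. Qed.

Lemma lincombD i j i' j' e1 e2 :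
  qadd (lincomb i j e1 e2) (lincomb i' j' e1 e2) = lincomb (i + i') (j + j') e1 e2.
Proof. rewrite /lincomb /qadd /qscale /=; congr pair; rewrite !intrD; ring. Qed.

Lemma lincomb0 e1 e2 : lincomb 0 0 e1 e2 = q0.
Proof. by rewrite /lincomb /qadd /qscale /q0 /= !mul0r addr0. Qed.

Lemma lattice_addgroup e1 e2 : addgroup (lattice e1 e2).
Proof.
split; first by exists 0, 0; rewrite lincomb0.
by move=> _ _ [i [j ->]] [i' [j' ->]]; rewrite lincombB; exists (i - i'), (j - j').
Qed.

Lemma sublatticeP e1 e2 n1 n2 x :
  sublattice e1 e2 n1 n2 x <-> exists k l : int, x = lincomb (k * n1%:Z) (l * n2%:Z) e1 e2.
Proof.
have E k l : lincomb (k * n1%:Z) (l * n2%:Z) e1 e2 =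
    lincomb k l (qscale n1%:R e1) (qscale n2%:R e2).
  by rewrite /lincomb /qadd /qscale /=; congr pair; rewrite !intrM /=; ring.
by split=> [[k [l ->]]|[k [l ->]]]; exists k, l; rewrite E.
Qed.

Lemma sublattice_sub e1 e2 n1 n2 x : sublattice e1 e2 n1 n2 x -> lattice e1 e2 x.
Proof. by move/sublatticeP=> [k [l ->]]; exists (k * n1%:Z), (l * n2%:Z). Qed.

Lemma iscale_lattice n e1 e2 : iscale n (lattice e1 e2) = sublattice e1 e2 n n.
Proof.
have E i j : qscale n%:R (lincomb i j e1 e2) = lincomb i j (qscale n%:R e1) (qscale n%:R e2).
  by apply: qf_ext; rewrite /lincomb /qadd /qscale /=; ring.
apply/seteqP; split => [_ [_ [i [j ->]] <-]|_ [i [j ->]]]; first by exists i, j.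
by exists (lincomb i j e1 e2); [exists i, j | rewrite E].
Qed.

Lemma lincomb_inj e1 e2 i j i' j' : det2 e1 e2 != 0 ->
  lincomb i j e1 e2 = lincomb i' j' e1 e2 -> i = i' /\ j = j'.
Proof.
move=> hd e; have := lincombB i j i' j' e1 e2; rewrite e qsubxx => /esym.
rewrite /lincomb /qadd /qscale /q0 /= => -[h1 h2].
have det_mul (u v : int) (w : rat) : (u%:~R : rat) * e1.1 + v%:~R * e2.1 = 0 ->
    u%:~R * e1.2 + v%:~R * e2.2 = 0 -> w = u%:~R \/ w = v%:~R -> w = 0.
  move=> hu hv hw; have : w * det2 e1 e2 = 0.
    case: hw => ->; rewrite /det2.
      rewrite (_ : _ * _ = e2.2 * (u%:~R * e1.1 + v%:~R * e2.1)
                         - e2.1 * (u%:~R * e1.2 + v%:~R * e2.2)); last by ring.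
      by rewrite hu hv; ring.
    rewrite (_ : _ * _ = e1.1 * (u%:~R * e1.2 + v%:~R * e2.2)
                       - e1.2 * (u%:~R * e1.1 + v%:~R * e2.1)); last by ring.
    by rewrite hu hv; ring.
  by move/eqP; rewrite mulf_eq0 (negbTE hd) orbF => /eqP.
split; apply/eqP; rewrite -subr_eq0 -(intr_eq0 rat); apply/eqP.
  exact: det_mul h1 h2 (or_introl _).
exact: det_mul h1 h2 (or_intror _).
Qed.

Lemma card_Zp2 n1 n2 : (1 < n1)%N -> (1 < n2)%N -> #|{: 'Z_n1 * 'Z_n2}| = (n1 * n2)%N.
Proof. by move=> h1 h2; rewrite card_prod !card_ord !Zp_cast. Qed.

Section Coordinates.
Variables (e1 e2 : qf) (n1 n2 : nat).
Hypotheses (hn1 : (1 < n1)%N) (hn2 : (1 < n2)%N) (hdet : det2 e1 e2 != 0).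

Definition lattice_coord (f : 'Z_n1 * 'Z_n2) : qf := lincomb (f.1 : nat)%:Z (f.2 : nat)%:Z e1 e2.

Local Notation N0 := (sublattice e1 e2 n1 n2).

Lemma lattice_coord_mem f : lattice e1 e2 (lattice_coord f).
Proof. by exists (f.1 : nat)%:Z, (f.2 : nat)%:Z. Qed.

Lemma lattice_coord_onto x : lattice e1 e2 x -> exists f, N0 (qsub x (lattice_coord f)).
Proof.
have modn_ord (i : int) n : (1 < n)%N ->
    exists r : 'Z_n, (i %/ n%:Z)%Z * n%:Z + (r : nat)%:Z = i.
  move=> n_gt1; have r0 : 0 <= (i %% n%:Z)%Z.
    by apply: modz_ge0; rewrite eqz_nat; case: (n) n_gt1.
  have rn : (`|(i %% n%:Z)%Z| < n)%N by rewrite -ltz_nat gez0_abs // ltz_pmod // ltz_nat ltnW.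
  by exists (`|(i %% n%:Z)%Z|%:R); rewrite val_Zp_nat ?modn_small // gez0_abs // -divz_eq.
move=> [i [j ->]]; have [r1 E1] := modn_ord i _ hn1; have [r2 E2] := modn_ord j _ hn2.
exists (r1, r2); rewrite /lattice_coord /= lincombB.
apply/sublatticeP; exists (i %/ n1%:Z)%Z, (j %/ n2%:Z)%Z.
by rewrite -[in X in lincomb X]E1 -[in X in lincomb _ X]E2 !addrK.
Qed.

Lemma lattice_coord_inj f g : N0 (qsub (lattice_coord f) (lattice_coord g)) -> f = g.
Proof.
case: f g => [f1 f2] [g1 g2]; rewrite /lattice_coord /= lincombB => /sublatticeP [k [l]].
move=> /(lincomb_inj hdet) [h1 h2].
have small_eq (n : nat) (a c : 'Z_n) (t : int) : (1 < n)%N ->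
    (a : nat)%:Z - (c : nat)%:Z = t * n%:Z -> a = c.
  move=> n_gt1 e; apply: val_inj => /=.
  have := ltn_ord a; have := ltn_ord c; move: e; move: (a : nat) (c : nat) => a' c'.
  rewrite Zp_cast // => e hc ha; have t0 : t = 0 by nia.
  by move: e; rewrite t0 mul0r; lia.
by congr pair; [exact: small_eq h1 | exact: small_eq h2].
Qed.

Lemma lattice_coordD f g :
  N0 (qsub (lattice_coord (f + g)) (qadd (lattice_coord f) (lattice_coord g))).
Proof.
case: f g => [f1 f2] [g1 g2]; rewrite /lattice_coord /= lincombD lincombB.
move: (f1 : nat) (g1 : nat) (f2 : nat) (g2 : nat) => a1 b1 a2 b2; rewrite !Zp_cast //.
apply/sublatticeP; exists (- ((a1 + b1) %/ n1)%N%:Z), (- ((a2 + b2) %/ n2)%N%:Z).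
by congr lincomb; [have := divn_eq (a1 + b1) n1 | have := divn_eq (a2 + b2) n2]; lia.
Qed.

Lemma card_param_sublattice : #|param_set lattice_coord N0 (fun=> True)| = 1%N.
Proof.
have lattice_coord0 : lattice_coord 0 = q0 by rewrite /lattice_coord lincomb0.
rewrite -(cards1 (0 : 'Z_n1 * 'Z_n2)); apply: eq_card => f; rewrite !inE.
apply/asboolP/eqP => [[N0f _]|->].
  apply: lattice_coord_inj; congr N0: N0f.
  by rewrite lattice_coord0; apply: qf_ext; rewrite /qsub /= !subr0.
by rewrite lattice_coord0; split; first exact: (lattice_addgroup _ _).1.
Qed.

Lemma count_mod_sublattice L P : (forall x, L x -> lattice e1 e2 x) ->
  (forall x y, L x -> N0 (qsub x y) -> L y /\ (P x <-> P y)) ->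
  count_mod L N0 P = #|param_set lattice_coord L P|.
Proof.
move=> Llat LP; rewrite (card_param_set (lattice_addgroup _ _) lattice_coordD) //.
  by rewrite card_param_sublattice muln1.
by move=> x /Llat /lattice_coord_onto.
Qed.

Lemma card_param_mul D s L M P : addgroup M ->
  (forall z, N0 z -> M (qmul D s z)) ->
  (forall x, L x -> exists2 y, lattice e1 e2 y & M (qsub x (qmul D s y))) ->
  (forall x y, L x -> M (qsub x y) -> L y /\ (P x <-> P y)) ->
  #|param_set (qmul D s \o lattice_coord) L P| =
    (count_mod L M P * #|param_set (qmul D s \o lattice_coord) M (fun=> True)|)%N.
Proof.
move=> gM sN0 Ls LP; apply: card_param_set => //.
  by move=> f g; rewrite /= -qmulDr -qmulBr; apply/sN0/lattice_coordD.
move=> x /Ls [y /lattice_coord_onto [f N0f] Mxy]; exists f.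
by apply: addgroup_sub_trans Mxy _ => //; rewrite /= -qmulBr; exact: sN0.
Qed.

End Coordinates.
Arguments lattice_coord e1 e2 {n1 n2} f.

Lemma lattice_index e1 e2 n1 n2 M : (1 < n1)%N -> (1 < n2)%N -> det2 e1 e2 != 0 ->
  addgroup M -> (forall x, sublattice e1 e2 n1 n2 x -> M x) ->
  (forall x, M x -> lattice e1 e2 x) ->
  (n1 * n2)%N = (count_mod (lattice e1 e2) M (fun=> True) *
                 count_mod M (sublattice e1 e2 n1 n2) (fun=> True))%N.
Proof.
move=> hn1 hn2 hdet gM NM Mlat.
have gL := lattice_addgroup e1 e2.
rewrite (count_mod_sublattice hn1 hn2 hdet) //; last first.
  move=> x y Mx /NM Nxy; split => //; exact: (addgroup_subKr gM Mx Nxy).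
rewrite -(card_param_set gM (fun f g => NM _ (lattice_coordD hn1 hn2 hdet f g))).
- rewrite -(card_Zp2 hn1 hn2); apply: eq_card => f; rewrite !inE.
  by apply/esym/asboolP; split => //; exact: lattice_coord_mem.
- by move=> x /(lattice_coord_onto hn1 hn2) [f /NM Mf]; exists f.
- by move=> x y Lx /Mlat Lxy; split => //; exact: (addgroup_subKr gL Lx Lxy).
Qed.

(* u + v omega, where omega = (1 + sqrt D) / 2 *)
Definition omegaZ (u v : int) : qf := (u%:~R + v%:~R / 2, v%:~R / 2).

Section RingOfIntegers.
Variables (D k : nat).
Hypothesis hDk : D = (4 * k + 1)%N.

Lemma OK_mul x y : OK D x -> OK D y -> OK D (qmul D x y).
Proof.
move=> [u1 [v1 ->]] [u2 [v2 ->]].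
exists (u1 * u2 + v1 * v2 * k%:Z), (u1 * v2 + u2 * v1 + v1 * v2).
by rewrite /qmul /= hDk natrD natrM; congr pair; rewrite !(intrD, intrM) /= -?pmulrn; field.
Qed.

Lemma OK_int (u : int) : OK D (u%:~R, 0).
Proof. by exists u, 0; rewrite /= mul0r addr0. Qed.

Lemma OK_sqrt : OK D (0, 1).
Proof. by exists (-1), 2; congr pair; rewrite /=; field. Qed.

Lemma OK_omega : OK D (1 / 2, 1 / 2).
Proof. by exists 0, 1; apply: qf_ext => /=; field. Qed.

Lemma OK_conj x : OK D x -> OK D (qconj x).
Proof.
move=> [u [v ->]]; exists (u + v), (- v).
by rewrite /qconj /=; congr pair; rewrite !(intrD, intrN); field.
Qed.

Lemma OK_ratP r : OK D (r, 0) -> exists u : int, r = u%:~R.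
Proof.
move=> [u [v []]] -> /esym /eqP; rewrite mulf_eq0 invr_eq0 orbF intr_eq0 => /eqP ->.
by exists u; rewrite mul0r addr0.
Qed.

Lemma OK_sqrt_coord x : OK D x -> exists t : int, x.2 * 2 = t%:~R.
Proof. by move=> [a [v ->]]; exists v => /=; field. Qed.

End RingOfIntegers.

Lemma int_subgroup_gen (Q : int -> Prop) :
  (exists x, x != 0 /\ Q x) -> (forall x y t, Q x -> Q y -> Q (x + t * y)) ->
  exists g : nat, [/\ (0 < g)%N, Q g%:Z & forall x, Q x -> (g%:Z %| x)%Z].
Proof.
move=> [x [x0 Qx]] Qc.
have QN y : Q y -> Q (- y).
  by move=> Qy; have := Qc _ _ (-1) (Qc _ _ (-1) Qy Qy) Qy; rewrite !mulN1r subrr add0r.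
have ex : exists n : nat, (0 < n)%N && `[< Q n%:Z >].
  exists `|x|%N; rewrite absz_gt0 x0 /=; apply/asboolP.
  case: (ltrgt0P x) x0 => [hx|hx|->] // _; first by rewrite gtz0_abs.
  by rewrite ltz0_abs //; apply: QN.
case: (ex_minnP ex) => g /andP [g0 /asboolP Qg] gmin; exists g; split => // y Qy.
have r0 : 0 <= (y %% g%:Z)%Z by apply: modz_ge0; rewrite eqz_nat -lt0n.
have rg : (y %% g%:Z)%Z < g%:Z by apply: ltz_pmod; rewrite ltz_nat.
have Qr : Q (y %% g%:Z)%Z.
  have := Qc _ _ (- (y %/ g%:Z)%Z) Qy Qg; congr Q.
  by rewrite {1}(divz_eq y g%:Z); ring.
apply/dvdz_mod0P/eqP; apply: contraT => rn0.
have /gmin : (0 < `|(y %% g%:Z)%Z|)%N && `[< Q `|(y %% g%:Z)%Z|%:Z >].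
  by rewrite absz_gt0 rn0 gez0_abs //; apply/asboolP.
by rewrite -lez_nat gez0_abs //; lia.
Qed.

Section IdealBasis.
Variables (D k : nat) (A : set qf) (d : nat).
Hypotheses (hDk : D = (4 * k + 1)%N) (hd : (0 < d)%N).
Hypothesis norm_anisotropic :
  forall u v : int, u * u + u * v - k%:Z * v * v = 0 -> u = 0 /\ v = 0.
Hypothesis Aadd : forall x y, A x -> A y -> A (qadd x y).
Hypothesis Amod : forall r x, OK D r -> A x -> A (qmul D r x).
Hypothesis Anz : exists x, A x /\ x <> (0, 0).
Hypothesis Ad : forall x, A x -> OK D (qscale d%:R x).

Definition in_ideal (u v : int) := A (qscale d%:R^-1 (omegaZ u v)).
Local Notation S := in_ideal.

Lemma d_neq0 : (d%:R : rat) != 0.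
Proof. by rewrite pnatr_eq0 -lt0n. Qed.

Lemma in_ideal_mul r u v : OK D r -> S u v -> A (qscale d%:R^-1 (qmul D r (omegaZ u v))).
Proof.
move=> Or Suv; have := Amod Or Suv; congr A.
by apply: qf_ext; rewrite /qmul /qscale /=; ring.
Qed.

Lemma in_idealD u v u' v' : S u v -> S u' v' -> S (u + u') (v + v').
Proof.
move=> h h'; have := Aadd h h'; congr A.
by apply: qf_ext; rewrite /qadd /qscale /omegaZ /= !intrD; ring.
Qed.

Lemma in_idealZ t u v : S u v -> S (t * u) (t * v).
Proof.
move=> h; have := in_ideal_mul (OK_int D t) h; congr A.
by apply: qf_ext; rewrite /qmul /qscale /omegaZ /= !intrM; ring.
Qed.

Lemma in_ideal_comb t u v u' v' : S u v -> S u' v' -> S (u + t * u') (v + t * v').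
Proof. by move=> h h'; apply: in_idealD h (in_idealZ t h'). Qed.

(* omega ^ 2 = omega + k *)
Lemma in_ideal_omega u v : S u v -> S (v * k%:Z) (u + v).
Proof.
move=> h; have := in_ideal_mul (OK_omega D) h; congr A.
apply: qf_ext; rewrite /qmul /qscale /omegaZ /=.
  rewrite hDk natrD natrM !intrD !intrM -?pmulrn /=.
  by congr (_ * _); field.
by rewrite !intrD; congr (_ * _); field.
Qed.

Lemma in_ideal_norm u v : S u v -> S (u * u + u * v - k%:Z * v * v) 0.
Proof.
move=> h; have hO : OK D (qconj (omegaZ u v)) by apply: OK_conj; exists u, v.
have := in_ideal_mul hO h; congr A.
by apply: qf_ext; rewrite /qmul /qscale /omegaZ /qconj /= ?hDk ?natrD ?natrM
  ?(intrD, intrB, intrM) -?pmulrn /=; congr (_ * _); field.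
Qed.

Lemma ideal_coords x : A x -> exists u v, x = qscale d%:R^-1 (omegaZ u v) /\ S u v.
Proof.
move=> Ax; have [u [v e]] := Ad Ax; exists u, v.
have ex : x = qscale d%:R^-1 (omegaZ u v).
  by rewrite /omegaZ -e; apply: qf_ext; rewrite /qscale /=; field; exact: d_neq0.
by split => //; rewrite /S -ex.
Qed.

Lemma ideal_omega_gen : exists (g : nat) (u0 : int),
  [/\ (0 < g)%N, S u0 g%:Z & forall u v, S u v -> (g%:Z %| v)%Z].
Proof.
have nz : exists v, v != 0 /\ exists u, S u v.
  have [x [Ax x0]] := Anz; have [u [v [ex Suv]]] := ideal_coords Ax.
  have [v0|v0] := eqVneq v 0; last by exists v; split => //; exists u.
  have [u0|u0] := eqVneq u 0.
    by case: x0; rewrite ex u0 v0; apply: qf_ext; rewrite /qscale /omegaZ /=; ring.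
  by exists u; split => //; exists (0 * k%:Z); have := in_ideal_omega Suv; rewrite v0 addr0.
have [|g [g0 [u0 Su0] gdvd]] := int_subgroup_gen nz.
  by move=> x y t [u Su] [u' Su']; exists (u + t * u'); exact: in_ideal_comb.
by exists g, u0; split => // u v Suv; apply: gdvd; exists u.
Qed.

Lemma ideal_rational_gen g u0 : (0 < g)%N -> S u0 g%:Z -> exists h : nat,
  [/\ (0 < h)%N, S h%:Z 0 & forall u, S u 0 -> (h%:Z %| u)%Z].
Proof.
move=> g0 Su0; apply: (@int_subgroup_gen (fun u => S u 0)).
  exists (u0 * u0 + u0 * g%:Z - k%:Z * g%:Z * g%:Z); split; last exact: in_ideal_norm.
  by apply/eqP => /norm_anisotropic [_ /eqP]; rewrite eqz_nat; case: (g) g0.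
by move=> x y t Sx Sy; have := in_ideal_comb t Sx Sy; rewrite mulr0 addr0.
Qed.

(* g generates the omega-coordinates of d a and h = a g its rational integers, so
   d a = h Z + (u0 + g omega) Z with u0 = c g. *)
Lemma frac_ideal_basis : exists (g a : nat) (c : int),
  [/\ (0 < g)%N, (0 < a)%N, (a%:Z %| c * c + c - k%:Z)%Z &
   A = lattice (qscale (g%:R / d%:R) (a%:R, 0)) (qscale (g%:R / d%:R) (c%:~R + 1 / 2, 1 / 2))].
Proof.
have [g [u0 [g0 Su0 gdvd]]] := ideal_omega_gen.
have [h [h0 Sh hdvd]] := ideal_rational_gen g0 Su0.
have gz : g%:Z != 0 by rewrite eqz_nat; case: (g) g0.
have [a ha] : exists a, h = (a * g)%N.
  have := in_ideal_omega Sh; rewrite mul0r addr0 => /gdvd; rewrite dvdzE /=.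
  by move/dvdnP.
have a0 : (0 < a)%N by move: h0; rewrite ha muln_gt0 => /andP [].
have [c hu0] : exists c, u0 = c * g%:Z.
  have /gdvd/dvdzP [c' hc'] := in_ideal_omega Su0.
  by exists (c' - 1); rewrite mulrBl mul1r -hc' addrK.
have hnorm : (a%:Z %| c * c + c - k%:Z)%Z.
  have := in_ideal_comb (- (c + 1)) (in_ideal_omega Su0) Su0.
  rewrite hu0 (_ : c * g%:Z + g%:Z + - (c + 1) * g%:Z = 0); last by ring.
  move/hdvd/dvdzP => [t ht]; apply/dvdzP; exists (- t); apply: (mulIf gz).
  rewrite (_ : - t * a%:Z * g%:Z = - (t * h%:Z)); last by rewrite ha PoszM; ring.
  by rewrite -ht; ring.
exists g, a, c; split => //.
have hd0 := d_neq0; apply/seteqP; split => x.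
  move=> /ideal_coords [u [v [-> Suv]]].
  have /dvdzP [t ht] : (g%:Z %| v)%Z by exact: gdvd Suv.
  have := in_ideal_comb (- t) Suv Su0.
  rewrite (_ : v + - t * g%:Z = 0); last by rewrite ht; ring.
  move/hdvd/dvdzP => [s hs]; exists s, t; apply: qf_ext; rewrite /lincomb /qadd /qscale /omegaZ /=.
    have -> : u = s * h%:Z + t * u0 by rewrite -hs; ring.
    by rewrite ht hu0 ha PoszM !(intrD, intrM) /=; field.
  by rewrite ht intrM /=; field.
move=> [s [t ->]].
have := in_ideal_comb t (in_idealZ s Sh) Su0; rewrite mulr0 add0r /S; congr A.
by apply: qf_ext;
  rewrite /lincomb /qadd /qscale /omegaZ /= ?ha ?hu0 ?PoszM !(intrD, intrM) /=; field.
Qed.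

End IdealBasis.

Lemma ratio_common_factor (X1 X2 Z n m : nat) :
  (n = X1 * Z)%N -> (m = X2 * Z)%N -> (0 < m)%N -> (X1%:R / X2%:R : rat) = n%:R / m%:R.
Proof.
move=> -> -> /[dup] hm; rewrite muln_gt0 => /andP [X0 Z0]; rewrite natrM.
by field; rewrite !pnatr_eq0 -!lt0n X0 Z0.
Qed.

Section IdealNorm.
Variables (D k g d a : nat) (c : int) (A : set qf).
Hypotheses (hDk : D = (4 * k + 1)%N) (hg : (0 < g)%N) (hd : (0 < d)%N) (ha : (0 < a)%N).
Hypothesis hac : (a%:Z %| c * c + c - k%:Z)%Z.
Let q : rat := g%:R / d%:R.
Let E1 := qscale q (a%:R, 0).
Let E2 := qscale q (c%:~R + 1 / 2, 1 / 2).
Hypothesis hA : A = lattice E1 E2.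
Let O2 : qf := (c%:~R + 1 / 2, 1 / 2).

Lemma q_neq0 : q != 0.
Proof. by rewrite /q mulf_eq0 invr_eq0 !pnatr_eq0 negb_or -!lt0n hg hd. Qed.

Lemma a_neq0 : (a%:R : rat) != 0.
Proof. by rewrite pnatr_eq0 -lt0n. Qed.

Lemma det_ideal_basis : det2 E1 E2 != 0.
Proof.
rewrite /det2 /E1 /E2 /qscale /= mulr0 mul0r subr0.
by apply: mulf_neq0; apply: mulf_neq0; rewrite ?q_neq0 ?a_neq0.
Qed.

Lemma OK_lattice : OK D = lattice (1, 0) O2.
Proof.
apply/seteqP; split => x.
  move=> [u [v ->]]; exists (u - v * c), v.
  by apply: qf_ext; rewrite /lincomb /qadd /qscale /O2 /= ?intrB ?intrM; field.
move=> [i [j ->]]; exists (i + j * c), j.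
by apply: qf_ext; rewrite /lincomb /qadd /qscale /O2 /= ?intrD ?intrM; field.
Qed.

Lemma det_OK_basis : det2 (1, 0) O2 != 0.
Proof. by rewrite /det2 /O2 /= mul0r subr0 mul1r. Qed.

(* A common sublattice of O_K and a, through which N(a) is computed. *)
Lemma sublattice_ideal_OK :
  sublattice E1 E2 (2 * d) (2 * d) = sublattice (1, 0) O2 (2 * g * a) (2 * g).
Proof.
have hd0 : (d%:R : rat) != 0 by rewrite pnatr_eq0 -lt0n.
by rewrite /sublattice; congr lattice; apply: qf_ext;
  rewrite /qscale /E1 /E2 /q /O2 /= ?natrM; first [field | ring].
Qed.

Lemma absnorm_ideal_basis : absnorm D A = q ^+ 2 * a%:R.
Proof.
have h1 : (1 < 2 * g * a)%N by rewrite -mulnA (@leq_pmul2l 2 1) // muln_gt0 hg ha.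
have h2 : (1 < 2 * g)%N by rewrite (@leq_pmul2l 2 1).
have h3 : (1 < 2 * d)%N by rewrite (@leq_pmul2l 2 1).
have gOK : addgroup (OK D) by rewrite OK_lattice; apply: lattice_addgroup.
have gA : addgroup A by rewrite hA; apply: lattice_addgroup.
have NOA x : sublattice (1, 0) O2 (2 * g * a) (2 * g) x -> (OK D `&` A) x.
  move=> Nx; split; first by rewrite OK_lattice; exact: sublattice_sub Nx.
  by rewrite hA; apply: (@sublattice_sub _ _ (2 * d) (2 * d)); rewrite sublattice_ideal_OK.
have I1 := lattice_index h1 h2 det_OK_basis (addgroupI gOK gA) NOA
  (fun x Ox => ltac:(by rewrite -OK_lattice; case: Ox)).
have I2 := lattice_index h3 h3 det_ideal_basis (addgroupI gOK gA)
  (fun x Nx => ltac:(by apply: NOA; rewrite -sublattice_ideal_OK))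
  (fun x Ox => ltac:(by rewrite -hA; case: Ox)).
rewrite -OK_lattice in I1; rewrite -hA sublattice_ideal_OK in I2.
rewrite /absnorm /lindex (ratio_common_factor I1 I2) ?muln_gt0 ?hd //.
have hd0 : (d%:R : rat) != 0 by rewrite pnatr_eq0 -lt0n.
by rewrite /q !natrM; field.
Qed.

Lemma ideal_mul_conj_div_norm x z : A x -> A z ->
  OK D (qscale (q ^+ 2 * a%:R)^-1 (qmul D x (qconj z))).
Proof.
have [t0 ht0] := dvdzP hac.
have DE : (D%:R : rat) = 4 * (c%:~R * c%:~R + c%:~R - t0%:~R * a%:R) + 1.
  have kE : (k%:R : rat) = c%:~R * c%:~R + c%:~R - t0%:~R * a%:R.
    have hk : k%:Z = c * c + c - t0 * a%:Z by rewrite -ht0; ring.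
    by rewrite pmulrn hk !(intrD, intrB, intrM, intrN) -?pmulrn.
  by rewrite hDk natrD natrM kE.
rewrite hA => -[i [j ->]] [i' [j' ->]].
exists (i * i' * a%:Z + (i * j' + j * i') * c + i * j' + j * j' * t0), (j * i' - i * j').
have hq := q_neq0; have ha0 := a_neq0.
by apply: qf_ext; rewrite /qscale /qmul /qconj /lincomb /qadd /E1 /E2 /= ?DE
  !(intrD, intrB, intrM) -?pmulrn; field; rewrite hq ha0.
Qed.

End IdealNorm.

Definition mulset D (s : qf) (X : set qf) : set qf := [set qmul D s x | x in X].

Definition norm_cong D (NA : rat) (n : nat) (r : rat) (l : qf) : Prop :=
  exists t : int, qnorm D l / NA - r = n%:R * t%:~R.

Lemma closed_subgroup_cosets (L M : set qf) : addgroup L -> (forall z, M z -> L z) ->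
  forall x y, L x -> M (qsub x y) -> L y /\ (True <-> True).
Proof. by move=> gL ML x y Lx /ML Lxy; split => //; exact: (addgroup_subKr gL Lx Lxy). Qed.

Section NormCongruence.
Variables (D k : nat) (A : set qf) (E1 E2 : qf) (NA : rat).
Hypotheses (hDk : D = (4 * k + 1)%N) (hD1 : (1 < D)%N).
Hypotheses (hA : A = lattice E1 E2) (hdet : det2 E1 E2 != 0).
Hypothesis Amod : forall r x, OK D r -> A x -> A (qmul D r x).
Hypothesis ANA : forall x z, A x -> A z -> OK D (qscale NA^-1 (qmul D x (qconj z))).
Hypothesis hNA0 : NA != 0.

Local Notation sqrtD := ((0, 1) : qf).
Local Notation isqrtD := ((0, D%:R^-1) : qf).

Lemma D_neq0 : (D%:R : rat) != 0.
Proof. by rewrite pnatr_eq0 -lt0n ltnW. Qed.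

Lemma iscaleP n y : iscale n A y <-> exists2 a, A a & y = qscale n%:R a.
Proof. by split => [[a Aa <-]|[a Aa ->]]; exists a. Qed.

Lemma mulsetP s y : mulset D s A y <-> exists2 a, A a & y = qmul D s a.
Proof. by split => [[a Aa <-]|[a Aa ->]]; exists a. Qed.

Lemma ideal_addgroup : addgroup A.
Proof. by rewrite hA; exact: lattice_addgroup. Qed.

Lemma mulset_addgroup s : addgroup (mulset D s A).
Proof.
have [A0 As] := ideal_addgroup; split.
  by exists q0 => //; apply: qf_ext; rewrite /qmul /q0 /=; ring.
by move=> _ _ [a Aa <-] [a' Aa' <-]; exists (qsub a a'); [exact: As | rewrite qmulBr].
Qed.

Lemma iscale_ideal n : iscale n A = sublattice E1 E2 n n.
Proof. by rewrite hA iscale_lattice. Qed.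

Lemma iscale_addgroup n : addgroup (iscale n A).
Proof. by rewrite iscale_ideal; exact: lattice_addgroup. Qed.

Lemma ideal_scale (n : nat) x : A x -> A (qscale n%:R x).
Proof.
move=> Ax; have := Amod (OK_int D n%:Z) Ax; congr A.
by apply: qf_ext; rewrite /qmul /qscale /= -pmulrn; ring.
Qed.

Lemma ideal_mul_sqrt (c : nat) x : A x -> A (qmul D (0, c%:R) x).
Proof.
move=> Ax; have := ideal_scale c (Amod (OK_sqrt D) Ax); congr A.
by apply: qf_ext; rewrite /qmul /qscale /=; ring.
Qed.

Lemma ideal_coord n1 n2 (f : 'Z_n1 * 'Z_n2) : A (lattice_coord E1 E2 f).
Proof. by rewrite hA; exact: lattice_coord_mem. Qed.

Lemma mem_iscale_mul_sqrt (c : nat) y : (0 < c)%N ->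
  iscale (c * D) A (qmul D (0, c%:R) y) <-> mulset D sqrtD A y.
Proof.
move=> c0; have hc : (c%:R : rat) != 0 by rewrite pnatr_eq0 -lt0n.
have hD := D_neq0; rewrite iscaleP mulsetP.
split => [[a Aa e]|[a Aa ->]]; exists a => //.
  move: e; rewrite /qmul /qscale /= natrM => -[h1 h2].
  apply: qf_ext => /=.
    have -> : y.1 = (0 * y.2 + c%:R * y.1) / c%:R by field.
    by rewrite h2; field.
  have -> : y.2 = (0 * y.1 + D%:R * (c%:R * y.2)) / (c%:R * D%:R) by field; rewrite hc hD.
  by rewrite h1; field; rewrite hc hD.
by apply: qf_ext; rewrite /qmul /qscale /= natrM; ring.
Qed.

Lemma mem_iscale_isqrt (c : nat) y :
  iscale c A (qmul D isqrtD y) <-> mulset D (0, c%:R) A y.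
Proof.
have hD := D_neq0; rewrite iscaleP mulsetP; split => [[a Aa e]|[a Aa ->]]; exists a => //.
  move: e; rewrite /qmul /qscale /= => -[h1 h2]; apply: qf_ext => /=.
    have -> : y.1 = D%:R * (0 * y.2 + D%:R^-1 * y.1) by field.
    by rewrite h2; field.
  have -> : y.2 = 0 * y.1 + D%:R * (D%:R^-1 * y.2) by field.
  by rewrite h1; field.
by apply: qf_ext; rewrite /qmul /qscale /=; field.
Qed.

Lemma iscale_sub_mulset (c : nat) z : iscale (c * D) A z -> mulset D (0, c%:R) A z.
Proof.
move/iscaleP => [a Aa ->]; apply/mulsetP; exists (qmul D sqrtD a); first exact: (ideal_mul_sqrt 1).
by apply: qf_ext; rewrite /qmul /qscale /= natrM; ring.
Qed.

Lemma mulset_lattice_rep s (M : set qf) x : addgroup M -> mulset D s A x ->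
  exists2 y, lattice E1 E2 y & M (qsub x (qmul D s y)).
Proof. by move=> gM /mulsetP [a Aa ->]; exists a; [rewrite -hA | rewrite qsubxx; exact: gM.1]. Qed.

(* Both correction terms are integers because x z' / N(a) and z z' / N(a) lie in O_K. *)
Lemma qnorm_add_mul_sqrt (b : nat) x z : A x -> A z -> exists t : int,
  qnorm D (qadd x (qmul D (0, b%:R) z)) / NA = qnorm D x / NA + (b * D)%:R * t%:~R.
Proof.
move=> Ax Az; have [t1 ht1] := OK_sqrt_coord (ANA Ax Az).
have /OK_ratP [t2 ht2] : OK D (qnorm D z / NA, 0).
  have := ANA Az Az; congr (OK D); apply: qf_ext; rewrite /qscale /qmul /qconj /qnorm /=.
    by field.
  by ring.
exists (- t1 - b%:Z * t2).
rewrite intrB intrN intrM -ht1 -ht2 /= /qnorm /qadd /qmul /qconj /=.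
by rewrite -[(b%:Z)%:~R]pmulrn natrM; field.
Qed.

Lemma norm_cong_translate (b : nat) (r : rat) x z : A x -> A z ->
  norm_cong D NA (b * D) r x <-> norm_cong D NA (b * D) r (qadd x (qmul D (0, b%:R) z)).
Proof.
move=> Ax Az; have [t0 ht0] := qnorm_add_mul_sqrt b Ax Az; rewrite /norm_cong ht0.
by split=> [[t ht]|[t ht]]; [exists (t + t0); rewrite intrD | exists (t - t0); rewrite intrB]; lra.
Qed.

Lemma qnorm_mul_isqrt y : qnorm D (qmul D isqrtD y) = - qnorm D y / D%:R.
Proof. by rewrite /qnorm /qmul /=; field; exact: D_neq0. Qed.

Lemma norm_cong_isqrt (b : nat) (m : int) y :
  norm_cong D NA b (- (m%:~R / D%:R)) (qmul D isqrtD y) <-> norm_cong D NA (b * D) m%:~R y.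
Proof.
rewrite /norm_cong qnorm_mul_isqrt; have hD := D_neq0.
split=> [[t ht]|[t ht]]; exists (- t); rewrite intrN ?natrM.
  have -> : qnorm D y / NA - m%:~R =
      - D%:R * (- qnorm D y / D%:R / NA - - (m%:~R / D%:R)) by field; rewrite hD hNA0.
  by rewrite ht; ring.
have -> : - qnorm D y / D%:R / NA - - (m%:~R / D%:R) =
    - D%:R^-1 * (qnorm D y / NA - m%:~R) by field; rewrite hNA0 hD.
by rewrite ht natrM; field.
Qed.

Lemma ideal_inv_different : ideal_inv D (different D) = [set x | OK D (qmul D sqrtD x)].
Proof.
apply/seteqP; split => x /= hx.
  have := hx (qmul D sqrtD (1, 0)) (ex_intro2 _ _ (1, 0) (OK_int D 1) erefl).
  by congr (OK D); apply: qf_ext; rewrite /qmul /=; ring.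
move=> _ [o Oo <-]; have := OK_mul hDk hx Oo.
by congr (OK D); apply: qf_ext; rewrite /qmul /=; ring.
Qed.

Lemma ideal_mul_inv_different : ideal_mul D A (ideal_inv D (different D)) = mulset D isqrtD A.
Proof.
have gA := ideal_addgroup; have hD := D_neq0.
rewrite ideal_inv_different; apply/seteqP; split => z.
  move=> [s [hs ->]]; elim: s hs => [|p s IH] hs /=.
    by exists q0; [exact: gA.1 | apply: qf_ext; rewrite /qmul /q0 /=; ring].
  apply: addgroup_add; first exact: mulset_addgroup.
    have [Ap1 Ip2] := hs p (mem_head _ _).
    exists (qmul D (qmul D sqrtD p.2) p.1); first exact: Amod.
    by apply: qf_ext; rewrite /qmul /=; field.
  by apply: IH => q qs; apply: hs; rewrite in_cons qs orbT.
move=> [a Aa <-]; exists [:: (a, isqrtD)]; split.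
  move=> p; rewrite mem_seq1 => /eqP -> /=; split => //.
  by have := OK_int D 1; congr (OK D); apply: qf_ext; rewrite /qmul /=; [field | ring].
by apply: qf_ext; rewrite /qmul /qadd /=; ring.
Qed.

Let param_sqrt :=
  param_set (lattice_coord E1 E2 (n1 := D) (n2 := D)) (mulset D sqrtD A) (fun=> True).

(* [c sqrt(D) a : c D a] [sqrt(D) a : D a] = [a : D a], counted after multiplying a by c sqrt(D). *)
Lemma index_mul_sqrt (c : nat) : (0 < c)%N ->
  (count_mod (mulset D (0 : rat, c%:R) A) (iscale (c * D) A) (fun=> True) * #|param_sqrt|)%N =
  (D * D)%N.
Proof.
move=> c0; have gM := iscale_addgroup (c * D).
have sN0 z : sublattice E1 E2 D D z -> iscale (c * D) A (qmul D (0, c%:R) z).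
  rewrite -iscale_ideal => /iscaleP [a Aa ->]; apply/iscaleP.
  exists (qmul D sqrtD a); first exact: (ideal_mul_sqrt 1).
  by apply: qf_ext; rewrite /qmul /qscale /= natrM; ring.
have LP := closed_subgroup_cosets (mulset_addgroup (0, c%:R)) (@iscale_sub_mulset c).
rewrite -(card_Zp2 hD1 hD1) -(cardsT ('Z_D * 'Z_D)%type).
have -> : [set: 'Z_D * 'Z_D]%SET = param_set (qmul D (0, c%:R) \o lattice_coord E1 E2)
    (mulset D (0, c%:R) A) (fun=> True).
  apply/setP => f; rewrite !inE; apply/esym/asboolP; split => //.
  by apply/mulsetP; exists (lattice_coord E1 E2 f) => //; exact: ideal_coord.
rewrite (card_param_mul hD1 hD1 hdet gM sN0 (fun x => mulset_lattice_rep gM) LP).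
congr (_ * _)%N; apply: eq_card => f; rewrite !inE /=.
by apply/asboolP/asboolP => -[h _]; split => //; exact/(mem_iscale_mul_sqrt _ c0).
Qed.

Lemma card_param_sqrt : #|param_sqrt| = D.
Proof.
have := index_mul_sqrt (ltn0Sn 0); rewrite mul1n iscale_ideal.
rewrite (count_mod_sublattice hD1 hD1 hdet); first last.
- rewrite -iscale_ideal; apply: closed_subgroup_cosets; first exact: (mulset_addgroup (0, 1)).
  by move=> z; rewrite -[X in iscale X]mul1n => /iscale_sub_mulset.
- by move=> _ /mulsetP [a Aa ->]; rewrite -hA; exact: (ideal_mul_sqrt 1).
by rewrite -/param_sqrt !mulnn => /eqP; rewrite eqn_exp2r // => /eqP.
Qed.

Lemma norm_cong_invariant (b : nat) (r : rat) x y : A x -> iscale (b * D) A (qsub x y) ->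
  A y /\ (norm_cong D NA (b * D) r x <-> norm_cong D NA (b * D) r y).
Proof.
move=> Ax /iscaleP [a Aa e]; have gA := ideal_addgroup; split.
  by apply: (addgroup_subKr gA Ax); rewrite e; apply: ideal_scale.
have Aa' : A (qsub q0 (qmul D sqrtD a)) by apply: gA.2; [exact: gA.1 | exact: (ideal_mul_sqrt 1)].
have -> : y = qadd x (qmul D (0, b%:R) (qsub q0 (qmul D sqrtD a))).
  move: e; rewrite /qsub /qadd /qmul /qscale /q0 natrM => -[e1 e2].
  by apply: qf_ext => /=; lra.
exact: norm_cong_translate.
Qed.

Lemma norm_cong_isqrt_invariant (b : nat) (m : int) x y :
  mulset D isqrtD A x -> iscale b A (qsub x y) ->
  mulset D isqrtD A y /\ (norm_cong D NA b (- (m%:~R / D%:R)) x <->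
                          norm_cong D NA b (- (m%:~R / D%:R)) y).
Proof.
move=> /mulsetP [a0 Aa0 ->] /iscaleP [a Aa e]; have gA := ideal_addgroup.
have Aa0' : A (qsub a0 (qmul D (0, b%:R) a)) by apply: gA.2 => //; exact: ideal_mul_sqrt.
have -> : y = qmul D isqrtD (qsub a0 (qmul D (0, b%:R) a)).
  move: e; rewrite /qsub /qadd /qmul /qscale /q0 => -[e1 e2].
  by apply: qf_ext => /=; rewrite -?e1 -?e2; field; exact: D_neq0.
split; first by apply/mulsetP; exists (qsub a0 (qmul D (0, b%:R) a)).
rewrite !norm_cong_isqrt (norm_cong_translate _ _ Aa0' Aa).
by have -> : qadd (qsub a0 (qmul D (0, b%:R) a)) (qmul D (0, b%:R) a) = a0
  by apply: qf_ext; rewrite /qadd /qsub /=; ring.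
Qed.

Lemma index_mul_bsqrt (b : nat) : (0 < b)%N ->
  count_mod (mulset D (0, b%:R) A) (iscale (b * D) A) (fun=> True) = D.
Proof.
move=> b0; have := index_mul_sqrt b0; rewrite card_param_sqrt => /eqP.
by rewrite eqn_pmul2r ?(ltnW hD1) // => /eqP.
Qed.

Lemma count_norm_cong (b : nat) (m : int) : (0 < b)%N ->
  (count_mod (mulset D isqrtD A) (iscale b A) (norm_cong D NA b (- (m%:~R / D%:R))) * D)%N =
  count_mod A (iscale (b * D) A) (norm_cong D NA (b * D) m%:~R).
Proof.
move=> b0; have hn : (1 < b * D)%N by apply: leq_trans hD1 _; rewrite leq_pmull.
rewrite (iscale_ideal (b * D)) (count_mod_sublattice hn hn hdet); first last.
- by move=> x y Ax; rewrite -iscale_ideal; exact: norm_cong_invariant.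
- by rewrite -hA.
set coordbD := lattice_coord E1 E2 (n1 := b * D) (n2 := b * D).
have -> : param_set coordbD A (norm_cong D NA (b * D) m%:~R) =
    param_set (qmul D isqrtD \o coordbD) (mulset D isqrtD A) (norm_cong D NA b (- (m%:~R / D%:R))).
  apply/setP => f; rewrite !inE /=; apply/asboolP/asboolP => -[_ h].
    by split; [apply/mulsetP; exists (coordbD f) => //; exact: ideal_coord | exact/norm_cong_isqrt].
  by split; [exact: ideal_coord | exact/norm_cong_isqrt].
have gM := iscale_addgroup b.
rewrite (card_param_mul hn hn hdet gM); first last.
- exact: norm_cong_isqrt_invariant.
- by move=> x; apply: mulset_lattice_rep.
- rewrite -iscale_ideal => z /iscaleP [a Aa ->]; apply/iscaleP.
  exists (qmul D sqrtD a); first exact: (ideal_mul_sqrt 1).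
  by apply: qf_ext; rewrite /qmul /qscale /= natrM; field; exact: D_neq0.
congr (_ * _)%N; rewrite -{1}(index_mul_bsqrt b0) (iscale_ideal (b * D)).
rewrite (count_mod_sublattice hn hn hdet); first last.
- rewrite -iscale_ideal; apply: closed_subgroup_cosets; first exact: mulset_addgroup.
  exact: iscale_sub_mulset.
- by move=> _ /mulsetP [a Aa ->]; rewrite -hA; exact: ideal_mul_sqrt.
apply: eq_card => f; rewrite !inE /=.
by apply/asboolP/asboolP => -[h _]; split => //; exact/mem_iscale_isqrt.
Qed.

End NormCongruence.

Lemma squarefree_neq_mul_square (D S V : nat) : squarefree D -> (1 < D)%N -> (0 < V)%N ->
  (S * S != D * (V * V))%N.
Proof.
move=> hsq hD V0; apply/eqP => e.
have S0 : (0 < S)%N by rewrite lt0n; apply/eqP => S0; move: e; rewrite S0 /=; nia.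
have D0 : (0 < D)%N by apply: ltnW.
set p := pdiv D; have pp : prime p := pdiv_prime hD.
have l1 : (0 < logn p D)%N by rewrite logn_gt0 mem_primes pp D0 pdiv_dvd.
have l2 : (logn p D < 2)%N.
  rewrite ltnNge -pfactor_dvdn //; apply/negP => h; apply: (hsq p pp).
  by move: h; rewrite expnS expn1.
have := congr1 (logn p) e.
rewrite lognM // lognM // ?muln_gt0 ?V0 // lognM //.
lia.
Qed.

Lemma norm_form_anisotropic (D k : nat) : squarefree D -> (1 < D)%N -> D = (4 * k + 1)%N ->
  forall u v : int, u * u + u * v - k%:Z * v * v = 0 -> u = 0 /\ v = 0.
Proof.
move=> hsq hD hDk u v e.
have e2 : (2 * u + v) * (2 * u + v) = D%:Z * (v * v).
  have h : u * u + u * v = k%:Z * v * v by apply/eqP; rewrite -subr_eq0 e.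
  rewrite hDk PoszD PoszM (_ : _ * _ = 4 * (u * u + u * v) + v * v); last by ring.
  by rewrite h; ring.
have [v0|v0] := eqVneq v 0.
  by move: e; rewrite v0 !mulr0 subr0 addr0 => /eqP; rewrite mulf_eq0 orbb => /eqP.
have V0 : (0 < absz v)%N by rewrite absz_gt0.
have /negP[] := squarefree_neq_mul_square (absz (2 * u + v)) hsq hD V0.
by apply/eqP; have := congr1 absz e2; rewrite !abszM.
Qed.

Theorem mainTheorem1 (D : nat) (hD1 : (1 < D)%N) (hD4 : (D %% 4 = 1)%N)
  (hDsq : squarefree D) (b : nat) (hb : (0 < b)%N) (A : set qf)
  (hA : is_frac_ideal D A) (m : int) :
  ((Gb D b A m)%:R : rat) = (Nb D (b * D) A m)%:R / D%:R.
Proof.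
pose k := (D %/ 4)%N.
have hDk : D = (4 * k + 1)%N by rewrite {1}(divn_eq D 4) hD4 mulnC.
case: hA => _ Aadd Amod Anz [d [hd Ad]].
have [g [a [c [g0 a0 hac hAl]]]] :=
  frac_ideal_basis hDk hd (norm_form_anisotropic hDsq hD1 hDk) Aadd Amod Anz Ad.
have hNA0 : (g%:R / d%:R) ^+ 2 * a%:R != 0 :> rat.
  by rewrite mulf_neq0 ?expf_neq0 ?q_neq0 ?a_neq0.
have ANA := ideal_mul_conj_div_norm hDk g0 hd a0 hac hAl.
rewrite /Gb /Nb (absnorm_ideal_basis D g0 hd a0 hAl).
rewrite (ideal_mul_inv_different hDk hD1 hAl Amod).
rewrite -(count_norm_cong hD1 hAl (det_ideal_basis c g0 hd a0) Amod ANA hNA0 m hb) natrM.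
by field; rewrite pnatr_eq0 -lt0n ltnW.
Qed.
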